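(* Let $n$ be a nonzero integer and let $\{a,b,c,d\}$ be a set of positive integers with the property $D(n)$ such that $|n|^3\le a<b<c<d$. Then \[ d>\frac{3.847\,bc}{n^2}. \]
   Context: A set of positive integers $S$ has the property $D(n)$ if $xy+n$ is a perfect square for all distinct $x,y\in S$. *)

From Stdlib Require Import ZArith.
Open Scope Z_scope.

Definition is_square (z : Z) : Prop := exists k : Z, z = k * k.

Definition has_property_D (n : Z) (S : Z -> Prop) : Prop :=
  (forall x, S x -> 0 < x) /\
  (forall x y, S x -> S y -> x <> y -> is_square (x * y + n)).

(* Write t^2 = bc + n, y^2 = bd + n, z^2 = cd + n and e = n(b+c+d) + 2bcd - 2tyz.
   The identities  d e + n^2 = (dt - yz)^2  and  e (e + 4tyz) = n^2 ((d-b-c)^2 - 4t^2)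
   show that e >= 0 as soon as d > n^2, and then that either e = 0, i.e. d = b + c + 2t
   is the regular extension of {b, c}, or 4tyz < n^2 (d-b-c)^2.
   The regular case is impossible: the same dichotomy for {a, c, d} would need either
   d = a + c + 2s < b + c + 2t, or a gap 4sxz < n^2 (d-a-c)^2, which fails because
   d - c = b + 2t < 3c and n^2 <= a.
   In the other case tyz is close to bcd (for n > 0 it is at least bcd; for n < 0 it is
   at least td when d >= b + c, and at least n^2 b^2 otherwise), which forces
   4bc < n^2 d, a bound stronger than the one claimed. *)

From Stdlib Require Import ZArith Lia.
Open Scope Z_scope.

Ltac nonneg :=
  repeat first [apply Z.pow_even_nonneg; now exists 1 | apply Z.mul_nonneg_nonneg];
  try lia.

Lemma has_property_D_sqrt n S x y :
  has_property_D n S -> S x -> S y -> x <> y ->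
  exists w, 0 <= w /\ w^2 = x*y + n.
Proof.
  intros [_ Hsq] Hx Hy Hxy.
  destruct (Hsq x y Hx Hy Hxy) as [k Hk].
  exists (Z.abs k). split; [lia|]. rewrite Hk, Z.pow_2_r. apply Z.abs_square.
Qed.

Definition triple_e (n p q r w1 w2 w3 : Z) : Z :=
  n*(p+q+r) + 2*p*q*r - 2*(w1*w2*w3).

Section DTriple.
Variables n p q r w1 w2 w3 : Z.
Hypothesis Hw1 : w1^2 = p*q + n.
Hypothesis Hw2 : w2^2 = p*r + n.
Hypothesis Hw3 : w3^2 = q*r + n.

Lemma triple_e_mul_r :
  r * triple_e n p q r w1 w2 w3 + n^2 = (r*w1 - w2*w3)^2.
Proof.
  unfold triple_e.
  transitivity (r*(n*(p+q+r) + 2*p*q*r) + n^2 - 2*r*(w1*w2*w3)); [ring|].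
  transitivity (r^2*w1^2 - 2*r*(w1*w2*w3) + w2^2*w3^2); [|ring].
  rewrite Hw1, Hw2, Hw3; ring.
Qed.

Lemma triple_e_quadratic :
  let e := triple_e n p q r w1 w2 w3 in
  e * (e + 4*(w1*w2*w3)) = n^2 * ((r-p-q)^2 - 4*w1^2).
Proof.
  unfold triple_e; cbv zeta.
  transitivity ((n*(p+q+r) + 2*p*q*r)^2 - 4*w1^2*w2^2*w3^2); [ring|].
  rewrite Hw1, Hw2, Hw3; ring.
Qed.

Lemma triple_e_nonneg : n^2 < r -> 0 <= triple_e n p q r w1 w2 w3.
Proof.
  intros Hr. pose proof triple_e_mul_r as Hid.
  set (e := triple_e n p q r w1 w2 w3) in *; clearbody e.
  destruct (Z_lt_le_dec e 0) as [He|He]; [exfalso|exact He].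
  assert (Hre : r*e <= -r) by (clear - Hr He; nia).
  assert (Hsq : 0 <= (r*w1 - w2*w3)^2) by nonneg.
  clear - Hr Hid Hre Hsq; lia.
Qed.

Lemma triple_regular_or_gap :
  n <> 0 -> 0 < p < q -> q < r -> Z.abs n <= p -> n^2 < r ->
  0 <= w1 -> 0 <= w2 -> 0 <= w3 ->
  r = p + q + 2*w1 \/ 4*(w1*w2*w3) < n^2 * (r-p-q)^2.
Proof.
  intros Hn Hpq Hqr Hnp Hr H1 H2 H3.
  pose proof (triple_e_nonneg Hr) as He.
  pose proof triple_e_quadratic as Hquad; cbv zeta in Hquad.
  set (e := triple_e n p q r w1 w2 w3) in *; clearbody e.
  destruct (Z.eq_dec e 0) as [->|He0].
  - left.
    rewrite Z.mul_0_l in Hquad. symmetry in Hquad.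
    apply Z.mul_eq_0 in Hquad as [Hn0|Hsq].
    { exfalso. exact (Hn (Z.pow_eq_0 _ _ Z.le_0_2 Hn0)). }
    replace ((r-p-q)^2 - 4*w1^2) with ((r-p-q-2*w1)*(r-p-q+2*w1)) in Hsq by ring.
    apply Z.mul_eq_0 in Hsq as [Hplus|Hminus]; [clear - Hplus; lia|].
    (* r = p + q - 2 w1 > q would force p > 2 w1, i.e. p^2 > 4 (p q + n) >= 4 p (q - 1). *)
    exfalso.
    assert (Hsq1 : (2*w1)^2 < p^2) by (apply Z.pow_lt_mono_l; clear - Hqr Hminus H1; lia).
    replace ((2*w1)^2) with (4*w1^2) in Hsq1 by ring.
    rewrite Hw1 in Hsq1.
    assert (Hlow : p*(4*q - 4) < p^2) by (clear - Hsq1 Hnp; lia).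
    clear - Hpq Hlow; nia.
  - right.
    assert (Hprod : 0 <= (e-1) * (e + 4*(w1*w2*w3))).
    { assert (HW : 0 <= w1*w2*w3) by nonneg. clear - He He0 HW; nonneg. }
    assert (Hnw : 0 <= n^2 * w1^2) by nonneg.
    clear - Hquad He He0 Hprod Hnw; lia.
Qed.

Lemma triple_gap_le :
  0 < p -> p <= q -> 3 <= q -> p < r - q <= 3*q -> n^2 <= p ->
  0 <= w1 -> 0 <= w2 -> 0 <= w3 ->
  n^2 * (r-p-q)^2 <= 4*(w1*w2*w3).
Proof.
  intros Hp Hpq Hq Hr Hnp H1 H2 H3.
  assert (Hn : - p <= n) by (clear - Hnp; nia).
  assert (L1 : 0 <= p*(q-1) <= w1^2) by (rewrite Hw1; clear - Hp Hq Hn; nia).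
  assert (L2 : 0 <= p*(r-1) <= w2^2) by (rewrite Hw2; clear - Hp Hq Hr Hn; nia).
  assert (L3 : 0 <= q*(r-1) <= w3^2) by (rewrite Hw3; clear - Hp Hpq Hq Hr Hn; nia).
  assert (Hlow : 16*(p*(q-1))*(p*(r-1))*(q*(r-1)) <= (4*(w1*w2*w3))^2).
  { destruct L1 as [L1a L1b], L2 as [L2a L2b], L3 as [L3a L3b].
    pose proof (Z.mul_le_mono_nonneg _ _ _ _ L1a L1b L2a L2b) as L12.
    pose proof (Z.mul_le_mono_nonneg _ _ _ _ (Z.mul_nonneg_nonneg _ _ L1a L2a) L12 L3a L3b)
      as L123.
    replace ((4*(w1*w2*w3))^2) with (16*(w1^2*w2^2*w3^2)) by ring.
    clear - L123; lia. }
  clear L1 L2 L3 Hw1 Hw2 Hw3.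
  assert (Hgap : n^2 * (r-p-q)^2 <= p * (r-q)^2).
  { apply Z.mul_le_mono_nonneg; [nonneg | exact Hnp | nonneg |].
    apply Z.pow_le_mono_l; clear - Hp Hr; lia. }
  assert (Hq16 : (r-q)^2 <= 16*(q*(q-1))).
  { assert (H3q : (r-q)^2 <= (3*q)^2) by (apply Z.pow_le_mono_l; clear - Hp Hr; lia).
    clear - Hq H3q; nia. }
  assert (Hr1 : (r-q)^2 <= (r-1)^2) by (apply Z.pow_le_mono_l; clear - Hp Hr Hq; lia).
  assert (Hup : (p*(r-q)^2)^2 <= 16*(p*(q-1))*(p*(r-1))*(q*(r-1))).
  { replace ((p*(r-q)^2)^2) with (p^2 * (r-q)^2 * (r-q)^2) by ring.
    replace (16*(p*(q-1))*(p*(r-1))*(q*(r-1))) with (p^2 * (16*(q*(q-1))) * (r-1)^2) by ring.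
    apply Z.mul_le_mono_nonneg; [nonneg | | nonneg | exact Hr1].
    apply Z.mul_le_mono_nonneg; [nonneg | reflexivity | nonneg | exact Hq16]. }
  assert (HX : 0 <= n^2 * (r-p-q)^2) by nonneg.
  apply (Z.square_le_simpl_nonneg (n^2 * (r-p-q)^2)); [nonneg|].
  pose proof (Z.mul_le_mono_nonneg _ _ _ _ HX Hgap HX Hgap) as Hsq.
  rewrite Z.pow_2_r in Hup, Hlow.
  eapply Z.le_trans; [exact Hsq|]. eapply Z.le_trans; [exact Hup | exact Hlow].
Qed.

Lemma triple_gap_pos_bound :
  0 <= n -> 0 < p < q -> q < r -> 0 <= w1 -> 0 <= w2 -> 0 <= w3 ->
  4*(w1*w2*w3) < n^2 * (r-p-q)^2 -> 4*p*q < n^2 * r.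
Proof.
  intros Hn Hpq Hqr H1 H2 H3 Hgap.
  assert (Hprod : p*q*r <= w1*w2*w3).
  { apply Z.square_le_simpl_nonneg; [nonneg|].
    replace (w1*w2*w3*(w1*w2*w3)) with (w1^2*w2^2*w3^2) by ring.
    replace (p*q*r*(p*q*r)) with ((p*q)*(p*r)*(q*r)) by ring.
    rewrite Hw1, Hw2, Hw3. clear - Hn Hpq Hqr.
    apply Z.mul_le_mono_nonneg; [nonneg | | nonneg | lia].
    apply Z.mul_le_mono_nonneg; [nonneg | lia | nonneg | lia]. }
  assert (Hr : (r-p-q)^2 <= r^2) by (clear - Hpq Hqr; nia).
  assert (Hr2 : n^2 * (r-p-q)^2 <= n^2 * r^2) by (apply Z.mul_le_mono_nonneg_l; nonneg).
  apply (Z.mul_lt_mono_pos_r r); [clear - Hpq Hqr; lia|].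
  rewrite Z.pow_2_r in Hr2. clear - Hprod Hgap Hr2; lia.
Qed.

Lemma triple_gap_neg_bound :
  n < 0 -> n^2 < p < q -> q < r -> 0 <= w1 -> 0 <= w2 -> 0 <= w3 ->
  4*(w1*w2*w3) < n^2 * (r-p-q)^2 -> 4*p*q < n^2 * r.
Proof.
  intros Hn Hpq Hqr H1 H2 H3 Hgap.
  assert (Hnp : - p < n) by (clear - Hn Hpq; nia).
  destruct (Z_lt_le_dec r (p+q)) as [Hsmall|Hlarge].
  - exfalso.
    assert (Hw1n : n^2 <= w1).
    { apply Z.square_le_simpl_nonneg; [exact H1|]. rewrite <- !Z.pow_2_r, Hw1.
      clear - Hn Hpq; nia. }
    assert (Hw23 : p^2 <= w2*w3).
    { apply Z.square_le_simpl_nonneg; [nonneg|].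
      replace (w2*w3*(w2*w3)) with (w2^2*w3^2) by ring. rewrite Hw2, Hw3.
      apply Z.mul_le_mono_nonneg; [nonneg | | nonneg | ]; clear - Hnp Hpq Hqr; nia. }
    assert (Hdiff : (r-p-q)^2 <= p^2) by (clear - Hpq Hqr Hsmall; nia).
    assert (HW : n^2 * p^2 <= w1*(w2*w3)) by (apply Z.mul_le_mono_nonneg; nonneg).
    assert (Hsq : n^2 * (r-p-q)^2 <= n^2 * p^2) by (apply Z.mul_le_mono_nonneg_l; nonneg).
    assert (Hnp2 : 0 <= n^2 * p^2) by nonneg.
    rewrite Z.mul_assoc in HW. clear - Hgap HW Hsq Hnp2; lia.
  - assert (Hw1r : w1*r <= w2*w3).
    { apply Z.square_le_simpl_nonneg; [nonneg|].
      replace (w2*w3*(w2*w3)) with (w2^2*w3^2) by ring.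
      replace (w1*r*(w1*r)) with (w1^2*r^2) by ring.
      rewrite Hw1, Hw2, Hw3.
      (* (p r + n)(q r + n) - (p q + n) r^2 = n^2 - n r (r - p - q) *)
      assert (Hnr : 0 <= - n * r * (r-p-q)) by (clear - Hn Hpq Hqr Hlarge; nonneg).
      assert (Hn2 : 0 <= n^2) by nonneg.
      clear - Hnr Hn2; lia. }
    assert (HW : w1^2 * r <= w1*w2*w3).
    { rewrite Z.pow_2_r, <- Z.mul_assoc, <- (Z.mul_assoc w1 w2).
      apply Z.mul_le_mono_nonneg_l; assumption. }
    assert (Hdiff : (r-p-q)^2 <= r*(r-p-q)) by (clear - Hpq Hqr Hlarge; nia).
    assert (Hsq : n^2 * (r-p-q)^2 <= n^2 * (r*(r-p-q))) by (apply Z.mul_le_mono_nonneg_l; nonneg).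
    rewrite Hw1 in HW.
    assert (Hlin : 4*(p*q + n) < n^2 * (r-p-q)).
    { apply (Z.mul_lt_mono_pos_r r); [clear - Hpq Hqr; lia|].
      clear - HW Hsq Hgap; lia. }
    assert (Hpq4 : 0 <= n^2*(p+q) + 4*n) by (clear - Hn Hpq; nia).
    clear - Hlin Hpq4; lia.
Qed.
End DTriple.

Lemma regular_extension_excluded n a b c d s t x z :
  n <> 0 -> n^2 <= a -> 0 < a -> a < b -> b < c -> c < d ->
  0 <= s -> 0 <= t -> 0 <= x -> 0 <= z ->
  s^2 = a*c + n -> t^2 = b*c + n -> x^2 = a*d + n -> z^2 = c*d + n ->
  d <> b + c + 2*t.
Proof.
  intros Hn Hna Ha Hab Hbc Hcd Hs0 Ht0 Hx0 Hz0 Hs Ht Hx Hz Hd.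
  assert (Hnabs : Z.abs n <= a) by (clear - Hna; nia).
  assert (Htc : t < c).
  { apply Z.square_lt_simpl_nonneg; [clear - Ha Hab Hbc; lia|].
    rewrite <- Z.pow_2_r, Ht. clear - Hnabs Hab Hbc; nia. }
  assert (Hst : s < t).
  { apply Z.square_lt_simpl_nonneg; [exact Ht0|]. rewrite <- !Z.pow_2_r, Hs, Ht.
    clear - Ha Hab Hbc; nia. }
  assert (Hac : 0 < a < c) by (clear - Ha Hab Hbc; lia).
  assert (Hnd : n^2 < d) by (clear - Hna Hab Hbc Hcd; lia).
  destruct (triple_regular_or_gap n a c d s x z Hs Hx Hz Hn Hac Hcd Hnabs Hnd Hs0 Hx0 Hz0)
    as [Hreg|Hgap]; [clear - Hd Hreg Hst Hab; lia|].
  assert (Hdc : a < d - c <= 3*c) by (clear - Hd Hab Hbc Htc Ht0; lia).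
  assert (Hc3 : 3 <= c) by (clear - Ha Hab Hbc; lia).
  pose proof (triple_gap_le n a c d s x z Hs Hx Hz Ha ltac:(lia) Hc3 Hdc Hna Hs0 Hx0 Hz0)
    as Hle.
  clear - Hgap Hle; lia.
Qed.

Theorem lemma4 (n a b c d : Z) :
  n <> 0 ->
  has_property_D n (fun x => x = a \/ x = b \/ x = c \/ x = d) ->
  Z.abs n ^ 3 <= a -> a < b -> b < c -> c < d ->
  3847 * b * c < 1000 * n ^ 2 * d.
Proof.
  intros Hn HD Ha Hab Hbc Hcd.
  assert (Ha0 : 0 < a) by (apply (proj1 HD); auto).
  assert (Hna : n^2 <= a).
  { rewrite (Z.pow_even_abs n 2) by now exists 1.
    assert (Z.abs n ^ 2 <= Z.abs n ^ 3) by (apply Z.pow_le_mono_r; lia). lia. }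
  assert (Hnabs : Z.abs n <= a).
  { assert (Z.abs n ^ 1 <= Z.abs n ^ 3) by (apply Z.pow_le_mono_r; lia). lia. }
  clear Ha.
  destruct (has_property_D_sqrt n _ a c HD ltac:(simpl; auto) ltac:(simpl; auto) ltac:(lia))
    as [s [Hs0 Hs]].
  destruct (has_property_D_sqrt n _ b c HD ltac:(simpl; auto) ltac:(simpl; auto) ltac:(lia))
    as [t [Ht0 Ht]].
  destruct (has_property_D_sqrt n _ a d HD ltac:(simpl; auto) ltac:(simpl; auto) ltac:(lia))
    as [x [Hx0 Hx]].
  destruct (has_property_D_sqrt n _ b d HD ltac:(simpl; auto) ltac:(simpl; auto) ltac:(lia))
    as [y [Hy0 Hy]].
  destruct (has_property_D_sqrt n _ c d HD ltac:(simpl; auto) ltac:(simpl; auto) ltac:(lia))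
    as [z [Hz0 Hz]].
  clear HD.
  assert (Hbcd : 4*b*c < n^2*d).
  { destruct (triple_regular_or_gap n b c d t y z Ht Hy Hz Hn ltac:(lia) Hcd
                ltac:(lia) ltac:(lia) Ht0 Hy0 Hz0) as [Hreg|Hgap].
    - exfalso. exact (regular_extension_excluded n a b c d s t x z
        Hn Hna Ha0 Hab Hbc Hcd Hs0 Ht0 Hx0 Hz0 Hs Ht Hx Hz Hreg).
    - destruct (Z_lt_le_dec n 0) as [Hneg|Hpos].
      + exact (triple_gap_neg_bound n b c d t y z Ht Hy Hz Hneg ltac:(lia) Hcd
                 Ht0 Hy0 Hz0 Hgap).
      + exact (triple_gap_pos_bound n b c d t y z Ht Hy Hz Hpos ltac:(lia) Hcd
                 Ht0 Hy0 Hz0 Hgap). }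
  clear - Ha0 Hab Hbc Hbcd; nia.
Qed.
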